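(* Let $\rho:\mathcal{F}\to[\Psi]^\omega$ be a partition regular function. Then $\rho$ is $P^+$ if and only if it is both $P^{\,|}$ and $P^-$.
   Context: Let $\Omega,\Psi$ be countably infinite sets and $\mathcal{F}\subseteq[\Omega]^\omega$ a nonempty family of infinite subsets of $\Omega$ with $A\setminus K\in\mathcal{F}$ for all $A\in\mathcal{F}$ and finite $K\subseteq\Omega$. A function $\rho:\mathcal{F}\to[\Psi]^\omega$ is partition regular if: (M) $E\subseteq F$ in $\mathcal{F}$ implies $\rho(E)\subseteq\rho(F)$; (R) for every $F\in\mathcal{F}$ and $A,B\subseteq\Psi$ with $\rho(F)=A\cup B$ there is $E\in\mathcal{F}$ with $\rho(E)\subseteq A$ or $\rho(E)\subseteq B$; (S) for every $F\in\mathcal{F}$ there is $E\subseteq F$, $E\in\mathcal{F}$, such that for every $a\in\rho(E)$ there is a finite $K\subseteq\Omega$ with $a\notin\rho(E\setminus K)$. $\mathcal{I}_\rho=\{S\subseteq\Psi:\forall F\in\mathcal{F}\ \rho(F)\not\subseteq S\}$ and $\mathcal{I}_\rho^+=\mathcal{P}(\Psi)\setminus\mathcal{I}_\rho$. For $F\in\mathcal{F}$ and $B\subseteq\Psi$ write $\rho(F)\subseteq^\rho B$ if there is a finite $K\subseteq\Omega$ with $\rho(F\setminus K)\subseteq B$ (a relation between $F$ and $B$). $\rho$ is $P^+$ if for every $\subseteq$-decreasing sequence $(A_n)_{n\in\omega}$ of sets in $\mathcal{I}_\rho^+$ there is $F\in\mathcal{F}$ with $\rho(F)\subseteq^\rho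 A_n$ for all $n$; $\rho$ is $P^-$ if the same holds for every such sequence additionally satisfying $A_n\setminus A_{n+1}\in\mathcal{I}_\rho$ for all $n$; $\rho$ is $P^{\,|}$ if the same holds for every such sequence additionally satisfying $A_n\setminus A_{n+1}\in\mathcal{I}_\rho^+$ for all $n$. *)

From Stdlib Require Import List.

Definition subset {T : Type} (A B : T -> Prop) : Prop := forall x, A x -> B x.

Definition setminus {T : Type} (A B : T -> Prop) : T -> Prop :=
  fun x => A x /\ ~ B x.

Definition is_finite {T : Type} (A : T -> Prop) : Prop :=
  exists l : list T, forall x, A x -> In x l.

Definition is_infinite {T : Type} (A : T -> Prop) : Prop := ~ is_finite A.

Definition countably_infinite (T : Type) : Prop :=
  exists (f : T -> nat) (g : nat -> T),
    (forall x, g (f x) = x) /\ (forall n, f (g n) = n).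

(* Standing assumptions on F and rho : F -> [Psi]^omega
   (rho is a total function on sets; only its values on F matter). *)
Definition standing {Omega Psi : Type}
  (F : (Omega -> Prop) -> Prop) (rho : (Omega -> Prop) -> (Psi -> Prop)) : Prop :=
  (exists A, F A) /\
  (forall A, F A -> is_infinite A) /\
  (forall A K, F A -> is_finite K -> F (setminus A K)) /\
  (forall A, F A -> is_infinite (rho A)).

Definition partition_regular {Omega Psi : Type}
  (F : (Omega -> Prop) -> Prop) (rho : (Omega -> Prop) -> (Psi -> Prop)) : Prop :=
  (forall E G, F E -> F G -> subset E G -> subset (rho E) (rho G)) /\
  (forall G (A B : Psi -> Prop), F G ->
     (forall y, rho G y <-> (A y \/ B y)) ->
     exists E, F E /\ (subset (rho E) A \/ subset (rho E) B)) /\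
  (forall G, F G -> exists E, F E /\ subset E G /\
     forall a, rho E a -> exists K, is_finite K /\ ~ rho (setminus E K) a).

Definition I_rho {Omega Psi : Type}
  (F : (Omega -> Prop) -> Prop) (rho : (Omega -> Prop) -> (Psi -> Prop))
  (S : Psi -> Prop) : Prop :=
  forall G, F G -> ~ subset (rho G) S.

Definition I_rho_plus {Omega Psi : Type}
  (F : (Omega -> Prop) -> Prop) (rho : (Omega -> Prop) -> (Psi -> Prop))
  (S : Psi -> Prop) : Prop := ~ I_rho F rho S.

Definition rho_subset {Omega Psi : Type}
  (rho : (Omega -> Prop) -> (Psi -> Prop)) (G : Omega -> Prop) (B : Psi -> Prop) : Prop :=
  exists K, is_finite K /\ subset (rho (setminus G K)) B.

Definition decreasing_positive {Omega Psi : Type}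
  (F : (Omega -> Prop) -> Prop) (rho : (Omega -> Prop) -> (Psi -> Prop))
  (A : nat -> Psi -> Prop) : Prop :=
  (forall n, subset (A (S n)) (A n)) /\ (forall n, I_rho_plus F rho (A n)).

Definition has_pseudo_int {Omega Psi : Type}
  (F : (Omega -> Prop) -> Prop) (rho : (Omega -> Prop) -> (Psi -> Prop))
  (A : nat -> Psi -> Prop) : Prop :=
  exists G, F G /\ forall n, rho_subset rho G (A n).

Definition P_plus {Omega Psi : Type}
  (F : (Omega -> Prop) -> Prop) (rho : (Omega -> Prop) -> (Psi -> Prop)) : Prop :=
  forall A : nat -> Psi -> Prop, decreasing_positive F rho A -> has_pseudo_int F rho A.

Definition P_minus {Omega Psi : Type}
  (F : (Omega -> Prop) -> Prop) (rho : (Omega -> Prop) -> (Psi -> Prop)) : Prop :=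
  forall A : nat -> Psi -> Prop, decreasing_positive F rho A ->
    (forall n, I_rho F rho (setminus (A n) (A (S n)))) -> has_pseudo_int F rho A.

Definition P_bar {Omega Psi : Type}
  (F : (Omega -> Prop) -> Prop) (rho : (Omega -> Prop) -> (Psi -> Prop)) : Prop :=
  forall A : nat -> Psi -> Prop, decreasing_positive F rho A ->
    (forall n, I_rho_plus F rho (setminus (A n) (A (S n)))) -> has_pseudo_int F rho A.

From Stdlib Require Import Classical ClassicalEpsilon Lia.

(* P^+ trivially implies P^| and P^-.  Conversely, given a decreasing sequence
   (A_n) of positive sets, either infinitely many gaps A_n \ A_(n+1) are
   positive, and P^| applies to a subsequence whose gaps contain those positive
   gaps, or from some point on every gap is null, and P^- applies to a tail.
   In both cases a pseudo-intersection of the subsequence is one of (A_n).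
   No property of rho beyond the definitions is needed. *)

Lemma infinitely_often_subsequence (P : nat -> Prop) :
  (forall N, exists m, N <= m /\ P m) ->
  exists phi : nat -> nat, (forall k, phi k < phi (S k)) /\ (forall k, P (phi k)).
Proof.
  intros HP.
  destruct (choice _ HP) as [next Hnext].
  exists (fix phi k := match k with 0 => next 0 | S k => next (S (phi k)) end).
  split; intro k.
  - apply Hnext.
  - destruct k; apply Hnext.
Qed.

Lemma strictly_increasing_ge_id (phi : nat -> nat) :
  (forall k, phi k < phi (S k)) -> forall k, k <= phi k.
Proof.
  intros Hphi k. induction k as [|k IH]; [lia|].
  specialize (Hphi k). lia.
Qed.

Definition gap {T : Type} (A : nat -> T -> Prop) (n : nat) : T -> Prop :=
  setminus (A n) (A (S n)).

Section PseudoIntersections.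

Context {Omega Psi : Type}.
Variable F : (Omega -> Prop) -> Prop.
Variable rho : (Omega -> Prop) -> (Psi -> Prop).

Lemma I_rho_plus_subset (S S' : Psi -> Prop) :
  I_rho_plus F rho S -> subset S S' -> I_rho_plus F rho S'.
Proof.
  intros HS HSS' HI. apply HS. intros G HG HGS.
  apply (HI G HG). intros x Hx. apply HSS', HGS, Hx.
Qed.

Lemma decreasing_positive_antitone (A : nat -> Psi -> Prop) :
  decreasing_positive F rho A -> forall n m, n <= m -> subset (A m) (A n).
Proof.
  intros [Hdec _] n m Hnm. induction Hnm as [|m _ IH].
  - intros x Hx. exact Hx.
  - intros x Hx. apply IH, Hdec, Hx.
Qed.

Lemma decreasing_positive_subsequence (A : nat -> Psi -> Prop) (phi : nat -> nat) :
  decreasing_positive F rho A -> (forall k, phi k <= phi (S k)) ->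
  decreasing_positive F rho (fun k => A (phi k)).
Proof.
  intros HA Hphi. split.
  - intro k. apply (decreasing_positive_antitone A HA), Hphi.
  - intro k. apply HA.
Qed.

Lemma has_pseudo_int_subset (A B : nat -> Psi -> Prop) :
  (forall n, subset (B n) (A n)) -> has_pseudo_int F rho B -> has_pseudo_int F rho A.
Proof.
  intros HBA [G [HG HGB]]. exists G. split; [exact HG|].
  intro n. destruct (HGB n) as [K [HK HKB]].
  exists K. split; [exact HK|].
  intros x Hx. apply HBA, HKB, Hx.
Qed.

Lemma has_pseudo_int_of_subsequence (A : nat -> Psi -> Prop) (phi : nat -> nat) :
  decreasing_positive F rho A -> (forall k, k <= phi k) ->
  has_pseudo_int F rho (fun k => A (phi k)) -> has_pseudo_int F rho A.
Proof.
  intros HA Hphi. apply has_pseudo_int_subset.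
  intro n. apply (decreasing_positive_antitone A HA), Hphi.
Qed.

Lemma P_bar_infinitely_many_positive_gaps (A : nat -> Psi -> Prop) :
  P_bar F rho -> decreasing_positive F rho A ->
  (forall N, exists m, N <= m /\ I_rho_plus F rho (gap A m)) ->
  has_pseudo_int F rho A.
Proof.
  intros Hbar HA Hgaps.
  destruct (infinitely_often_subsequence _ Hgaps) as [phi [Hphi Hpos]].
  apply (has_pseudo_int_of_subsequence A phi HA (strictly_increasing_ge_id phi Hphi)).
  apply Hbar.
  - apply decreasing_positive_subsequence; [exact HA|].
    intro k. specialize (Hphi k). lia.
  - intro k. apply (I_rho_plus_subset (gap A (phi k))); [apply Hpos|].
    intros x [Hx Hx']. split; [exact Hx|].
    intro Hx''. apply Hx'.
    exact (decreasing_positive_antitone A HA (S (phi k)) (phi (S k)) (Hphi k) x Hx'').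
Qed.

Lemma P_minus_eventually_null_gaps (A : nat -> Psi -> Prop) (N : nat) :
  P_minus F rho -> decreasing_positive F rho A ->
  (forall m, N <= m -> I_rho F rho (gap A m)) ->
  has_pseudo_int F rho A.
Proof.
  intros Hminus HA Hnull.
  apply (has_pseudo_int_of_subsequence A (fun k => N + k) HA); [intro; lia|].
  apply Hminus.
  - apply decreasing_positive_subsequence; [exact HA|]. intro; lia.
  - intro k. rewrite <- plus_n_Sm. apply Hnull. lia.
Qed.

End PseudoIntersections.

Theorem proposition3p1 (Omega Psi : Type)
  (F : (Omega -> Prop) -> Prop) (rho : (Omega -> Prop) -> (Psi -> Prop)) :
  countably_infinite Omega -> countably_infinite Psi ->
  standing F rho -> partition_regular F rho ->
  (P_plus F rho <-> (P_bar F rho /\ P_minus F rho)).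
Proof.
  intros _ _ _ _. split.
  - intros Hplus. split; intros A HA _; apply Hplus, HA.
  - intros [Hbar Hminus] A HA.
    destruct (classic (forall N, exists m, N <= m /\ I_rho_plus F rho (gap A m)))
      as [Hpos | Hfin].
    + exact (P_bar_infinitely_many_positive_gaps F rho A Hbar HA Hpos).
    + destruct (not_all_ex_not _ _ Hfin) as [N HN].
      apply (P_minus_eventually_null_gaps F rho A N Hminus HA).
      intros m Hm. apply NNPP. intro Hgap. apply HN. exists m. split; assumption.
Qed.
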